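(* Let $X$ be a smooth toric variety with fan $\Sigma$, let $\sigma\in\Sigma$ be a $2$-dimensional cone with $\sigma(1)=\{\rho_1,\rho_2\}$, and let $X'$ be the toric variety of the star subdivision $\Sigma'$ of $\Sigma$ relative to $\sigma$ (the blow-up of $X$ along $\overline{O_\sigma}$), with $E$ the $T$-invariant prime divisor of the new ray generated by $v_\sigma=v_{\rho_1}+v_{\rho_2}$. Let $F(x,y)=x+y-vxy$ with $v\in R$. Let $\pi_*: R\llbracket \mathrm{CDiv}_T(X') \rrbracket_F/I_{\Sigma'} \to R\llbracket \mathrm{CDiv}_T(X) \rrbracket_F/I_\Sigma$ be a homomorphism of $R\llbracket \mathrm{CDiv}_T(X) \rrbracket_F/I_\Sigma$-modules (the source being a module via $\pi^*$) such that $\pi_*(1)=1$ and $\pi_*(x_{D_{\rho,\Sigma'}})=x_{D_{\rho,\Sigma}}$ for every $\rho\in\Sigma(1)$. Write $x_i$ for both $x_{D_{\rho_i,\Sigma'}}$ and $x_{D_{\rho_i,\Sigma}}$, $i=1,2$. Then \[ \pi_*(x_E)=v\,x_1x_2,\qquad \pi_*(x_E^n)=v\sum_{i=1}^{n}x_1^{n+1-i}x_2^i-\sum_{i=1}^{n-1}x_1^{n-i}x_2^i \ (n\geq 2), \] \[ \pi_*(x_a^s x_E^t)=x_a\,x_b^t\,(x_a-_F x_b)^{s-1}\quad (s\geq1,\ t\geq0,\ \{a,b\}=\{1,2\}). \]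
   Context: Let $R$ be a commutative ring and $F$ a one-dimensional commutative formal group law over $R$; write $x+_F y=F(x,y)$ and $x-_F y = x+_F \chi(y)$ where $\chi$ is the formal inverse. For an abelian group $M$, the formal group ring $R\llbracket M\rrbracket_F$ is the quotient of the completion of $R[x_\lambda:\lambda\in M]$ at the kernel of the augmentation $x_\lambda\mapsto0$ by the closure of the ideal generated by $x_0$ and $x_{\lambda+\mu}-(x_\lambda+_F x_\mu)$; classes are denoted $x_\lambda$. $T$ is a split torus with cocharacter lattice $T_*$. A smooth toric variety $X$ has fan $\Sigma$ in $T_*$; $\Sigma(1)$ its rays, $\theta(1)$ the rays of a cone $\theta$, $v_\rho$ the primitive generator of $\rho$. For a fan $\Delta$ with toric variety $Y$, $\mathrm{CDiv}_T(Y)=\bigoplus_{\rho\in\Delta(1)}\mathbb{Z}D_{\rho,\Delta}$ (free on $T$-invariant prime divisors), and $I_\Delta$ is the ideal of $R\llbracket\mathrm{CDiv}_T(Y)\rrbracket_F$ generated by $\prod_{\rho\in S}x_{D_{\rho,\Delta}}$ over all $S\subseteq\Delta(1)$ with $S\not\subseteq\theta(1)$ for every cone $\theta\in\Delta$. The star subdivision of $\Sigma$ relative to $\sigma$ is $\Sigma'=\{\theta\in\Sigma:\sigma\not\subseteq\theta\}\cup\bigcup_{\sigma\subseteq\theta}\{\mathrm{cone}(S): S\subseteq\{v_\sigma\}\cup\{v_\rho:\rho\in\theta(1)\},\ \{v_\rho:\rho\in\sigma(1)\}\not\subseteq S\}$, where $v_\sigma=\sum_{\rho\in\sigma(1)}v_\rho$;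 thus $\Sigma'(1)=\Sigma(1)\cup\{\widetilde\rho\}$ with $\widetilde\rho$ generated by $v_\sigma$, $E=D_{\widetilde\rho,\Sigma'}$, and $\mathrm{CDiv}_T(X')=\mathrm{CDiv}_T(X)\oplus\mathbb{Z}E$. The pull-back $\pi^*: R\llbracket\mathrm{CDiv}_T(X)\rrbracket_F/I_\Sigma\to R\llbracket\mathrm{CDiv}_T(X')\rrbracket_F/I_{\Sigma'}$ is the $R$-algebra homomorphism with $x_{D_{\rho,\Sigma}}\mapsto x_{D_{\rho,\Sigma'}}$ if $\rho\notin\sigma(1)$ and $x_{D_{\rho,\Sigma}}\mapsto x_{D_{\rho,\Sigma'}+E}=x_{D_{\rho,\Sigma'}}+_F x_E$ if $\rho\in\sigma(1)$. *)

From HB Require Import structures.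
From mathcomp Require Import all_boot all_algebra.
From mathcomp Require Import boolp.
From mathcomp Require Import mpoly.
Set Implicit Arguments. Unset Strict Implicit. Unset Printing Implicit Defensive.
Import GRing.Theory.
Local Open Scope ring_scope.

(* A series is its coefficient function on monomials 'X_{1..n}; the product   *)
(* is the Cauchy product (computed through polynomial truncations).           *)
(* For a free abelian group M with basis e_0..e_{n-1} the formal group ring    *)
(* R[[M]]_F is (canonically) this power series ring, with x_{e_i} = x_i.       *)

Section PS.

Variables (R : comNzRingType) (n : nat).

Record ps := PS { pscoef : 'X_{1..n} -> R }.

HB.instance Definition _ := gen_eqMixin ps.
HB.instance Definition _ := gen_choiceMixin ps.

Lemma psP (f g : ps) : (forall m, pscoef f m = pscoef g m) -> f = g.
Proof. by case: f; case: g => f g /= H; congr PS; apply: funext. Qed.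

Definition ps0 := PS (fun _ => 0).
Definition psopp f := PS (fun m => - pscoef f m).
Definition psadd f g := PS (fun m => pscoef f m + pscoef g m).

Lemma psaddA : associative psadd.
Proof. by move=> f g h; apply: psP => m /=; rewrite addrA. Qed.
Lemma psaddC : commutative psadd.
Proof. by move=> f g; apply: psP => m /=; rewrite addrC. Qed.
Lemma psadd0 : left_id ps0 psadd.
Proof. by move=> f; apply: psP => m /=; rewrite add0r. Qed.
Lemma psaddN : left_inverse ps0 psopp psadd.
Proof. by move=> f; apply: psP => m /=; rewrite addNr. Qed.

HB.instance Definition _ := GRing.isZmodule.Build ps psaddA psaddC psadd0 psaddN.

Definition pstrunc (d : nat) (f : ps) : {mpoly R[n]} :=
  \sum_(m : 'X_{1..n < d}) pscoef f m *: 'X_[m].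

Lemma pstruncE d f m :
  (pstrunc d f)@_m = if (mdeg m < d)%N then pscoef f m else 0.
Proof.
case: ifP => [lt|ge]; first exact: mcoeff_mpoly.
rewrite /pstrunc raddf_sum big1 // => k _ /=; rewrite mcoeffZ mcoeffX.
case: eqP => [e|]; last by rewrite mulr0.
by have := bmdeg k; rewrite e ge.
Qed.

Definition ps1 := PS (fun m => (m == 0%MM)%:R).
Definition psmul f g :=
  PS (fun m => (pstrunc (mdeg m).+1 f * pstrunc (mdeg m).+1 g)@_m).

Lemma mcoeffM_local (p p' q q' : {mpoly R[n]}) m :
  (forall k, (mdeg k <= mdeg m)%N -> p@_k = p'@_k) ->
  (forall k, (mdeg k <= mdeg m)%N -> q@_k = q'@_k) ->
  (p * q)@_m = (p' * q')@_m.
Proof.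
move=> Hp Hq; rewrite !mcoeffM; apply: eq_bigr => k /eqP E.
have D : mdeg m = (mdeg k.1 + mdeg k.2)%N by rewrite -mdegD -E.
have L1 : forall a b c : nat, c = (a + b)%N -> (a <= c)%N by move=> a b c ->; exact: leq_addr.
have L2 : forall a b c : nat, c = (a + b)%N -> (b <= c)%N by move=> a b c ->; exact: leq_addl.
by rewrite Hp ?Hq //; [exact: L2 D | exact: L1 D].
Qed.

Lemma psmulE f g m d : (mdeg m < d)%N ->
  pscoef (psmul f g) m = (pstrunc d f * pstrunc d g)@_m.
Proof.
move=> lt; apply: mcoeffM_local => k le; rewrite !pstruncE ltnS le.
  by rewrite (leq_ltn_trans le lt).
by rewrite (leq_ltn_trans le lt).
Qed.

Lemma pstrunc_mul f g d :
  forall k, (mdeg k < d)%N -> (pstrunc d (psmul f g))@_k = (pstrunc d f * pstrunc d g)@_k.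
Proof. by move=> k lt; rewrite pstruncE lt (psmulE _ _ lt). Qed.

Lemma psmulA : associative psmul.
Proof.
move=> f g h; apply: psP => m; set d := (mdeg m).+1.
rewrite !(@psmulE _ _ m d) //.
transitivity ((pstrunc d f * (pstrunc d g * pstrunc d h))@_m).
  by apply: mcoeffM_local => // k le; rewrite pstrunc_mul // ltnS.
rewrite mulrA; apply: mcoeffM_local => // k le.
by rewrite pstrunc_mul // ltnS.
Qed.

Lemma psmulC : commutative psmul.
Proof. by move=> f g; apply: psP => m /=; rewrite mulrC. Qed.

Lemma pstrunc1 d : (0 < d)%N -> pstrunc d ps1 = 1.
Proof.
move=> d0; apply/mpolyP => m; rewrite pstruncE mcoeff1 /=.
case: ifP => // /negbT; rewrite -leqNgt => le.
case: eqP => // e; move: le; rewrite e mdeg0 leqn0 => /eqP d00.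
by move: d0; rewrite d00.
Qed.

Lemma psmul1 : left_id ps1 psmul.
Proof.
move=> f; apply: psP => m /=; rewrite pstrunc1 // mul1r pstruncE ltnSn //.
Qed.

Lemma pstruncD d f g : pstrunc d (psadd f g) = pstrunc d f + pstrunc d g.
Proof. by apply/mpolyP => m; rewrite mcoeffD !pstruncE; case: ifP; rewrite ?addr0. Qed.

Lemma psmulDl : left_distributive psmul psadd.
Proof. by move=> f g h; apply: psP => m /=; rewrite pstruncD mulrDl mcoeffD. Qed.

Lemma ps1_neq0 : ps1 != 0.
Proof.
apply/eqP => /(congr1 (fun f => pscoef f 0%MM)) /=; rewrite eqxx.
by move/eqP; rewrite oner_eq0.
Qed.

HB.instance Definition _ := GRing.Zmodule_isComNzRing.Build ps psmulA psmulC psmul1 psmulDl ps1_neq0.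

End PS.

Arguments PS {R n}.
Arguments pscoef {R n}.

Section PSops.
Variable R : comNzRingType.

Definition psC n (c : R) : ps R n := PS (fun m => if m == 0%MM then c else 0).

Definition psX n (i : 'I_n) : ps R n := PS (fun m => (m == U_(i)%MM)%:R).

(* substitution  a(x_0,...,x_{n-1}) |-> a(phi 0, ..., phi (n-1)), meaningful  *)
(* (continuous R-algebra homomorphism) when every phi i has zero constant term *)
Definition ps_subst n k (phi : 'I_n -> ps R k) (a : ps R n) : ps R k :=
  PS (fun m =>
    (\sum_(j : 'X_{1..n < (mdeg m).+1})
        pscoef a j *: \prod_(i < n) (pstrunc (mdeg m).+1 (phi i)) ^+ (j i))@_m).

Definition fgl_add (v : R) n (x y : ps R n) : ps R n := x + y - psC n v * x * y.

(* Its formal inverse chi(t) = - t / (1 - v t) = - sum_{k >= 0} v^k t^(k+1),   *)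
Definition fgl_inv_series (v : R) : ps R 1 :=
  PS (fun m => if mdeg m == 0%N then 0 else - v ^+ (mdeg m).-1).

Definition fgl_inv (v : R) n (y : ps R n) : ps R n :=
  ps_subst (fun _ => y) (fgl_inv_series v).
Definition fgl_sub (v : R) n (x y : ps R n) : ps R n :=
  fgl_add v x (fgl_inv v y).

(* Stanley-Reisner type ideal I_Delta of R[[CDiv_T(Y)]]_F : generated by the  *)
(* products prod_{rho in S} x_rho for S not contained in the ray set of any    *)
(* cone of Delta.  A cone of a smooth fan is identified with its ray set.     *)
Definition nonface n (cones : {set {set 'I_n}}) (S : {set 'I_n}) : bool :=
  [forall th in cones, ~~ (S \subset th)].

Definition in_ideal n (cones : {set {set 'I_n}}) (f : ps R n) : Prop :=
  exists c : {set 'I_n} -> ps R n,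
    f = \sum_(S : {set 'I_n} | nonface cones S) c S * \prod_(i in S) psX i.

(* congruence modulo I_Delta, i.e. equality in R[[CDiv_T(Y)]]_F / I_Delta *)
Definition eqmod n (cones : {set {set 'I_n}}) (f g : ps R n) : Prop :=
  in_ideal cones (f - g).

End PSops.
Arguments psX {R n}.

(* Smooth fans in T_* = Z^d.  Rays are indexed by 'I_N, with primitive         *)
(* generators vr : 'I_N -> 'rV[int]_d; a cone theta is recorded by its ray set *)
(* theta(1) (theta = cone(v_rho : rho in theta(1))).                            *)

Definition in_cone d N (vr : 'I_N -> 'rV[int]_d) (S : {set 'I_N}) (x : 'rV[rat]_d) :
  Prop :=
  exists c : 'I_N -> rat,
    [/\ forall i, 0 <= c i, forall i, i \notin S -> c i = 0 &
        x = \sum_(i < N) c i *: map_mx (fun z : int => z%:~R) (vr i)].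

Definition smooth_fan d N (vr : 'I_N -> 'rV[int]_d) (cones : {set {set 'I_N}}) : Prop :=
  [/\ (* every index is a ray of the fan: Sigma(1) = 'I_N *)
      forall i, [set i] \in cones,
      forall S T : {set 'I_N}, S \in cones -> T \subset S -> T \in cones,
      (* smoothness: generators of each cone are part of a Z-basis of Z^d *)
      forall S : {set 'I_N}, S \in cones -> exists2 M : 'M[int]_d, M \in unitmx &
        exists2 g : 'I_N -> 'I_d, {in S &, injective g} &
          forall i, i \in S -> row (g i) M = vr i &
      (* two cones intersect in a common face *)
      forall S T : {set 'I_N}, S \in cones -> T \in cones -> forall x,
        in_cone vr S x -> in_cone vr T x -> in_cone vr (S :&: T) x].

(* rays of Sigma viewed as rays of the star subdivision Sigma' (whose rays are *)
(* 'I_N.+1, the new ray tilde-rho generated by v_sigma being ord_max)         *)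
Definition old_ray N (i : 'I_N) : 'I_N.+1 := widen_ord (leqnSn N) i.
Definition new_ray N : 'I_N.+1 := ord_max.

Definition star_cones N (cones : {set {set 'I_N}}) (sigma : {set 'I_N}) :
  {set {set 'I_N.+1}} :=
  [set S' : {set 'I_N.+1} | [exists th in cones,
     (~~ (sigma \subset th) && (S' == @old_ray N @: th))
  || [&& sigma \subset th, S' \subset new_ray N |: (@old_ray N @: th)
       & ~~ (@old_ray N @: sigma \subset S')]]].

Definition pullback (R : comNzRingType) (v : R) N (sigma : {set 'I_N})
  (a : ps R N) : ps R N.+1 :=
  ps_subst (fun i : 'I_N => if i \in sigma then
                              fgl_add v (psX (old_ray i)) (psX (new_ray N))
                            else psX (old_ray i)) a.

From HB Require Import structures.
From mathcomp Require Import all_boot all_algebra.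
From mathcomp Require Import boolp mpoly ring.
From Stdlib Require Import Morphisms.
Set Implicit Arguments. Unset Strict Implicit. Unset Printing Implicit Defensive.
Import GRing.Theory.
Local Open Scope ring_scope.

(* Since sigma(1) = {rho_a, rho_b} spans no cone of the star subdivision, x_a x_b lies in
   I_Sigma'.  So modulo I_Sigma', multiplying by x_a kills x_b: it identifies
   pi^*(x_b) = x_b +_F x_E with x_E, and pi^*(x_a -_F x_b) = (x_a +_F x_E) -_F (x_b +_F x_E)
   with (x_a +_F x_E) -_F x_E = x_a.  Hence x_a^(s+1) x_E^t = x_a pi^*(x_b^t (x_a -_F x_b)^s)
   modulo I_Sigma', and the projection formula pi_*(pi^*(g) f) = g pi_*(f) together with
   pi_*(x_a) = x_a gives the last formula.  Applying pi_* to pi^*(x_a) x_E^n = (x_a +_F x_E) x_E^n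
   gives the recursion pi_*(x_E^(n+1)) = x_a pi_*(x_E^n) - x_a x_b^n + v x_a x_b^(n+1), which
   starts from pi_*(1) = 1 and is solved by the closed formula.
   That pi^* is a ring morphism holds because the coefficient of a monomial of degree m in a
   substitution only depends on the truncations of all series below degree m + 1. *)

Section VanishBelow.
Variables (R : comNzRingType) (k : nat).
Implicit Types (p q : {mpoly R[k]}).

Definition vanish_below D p := forall m : 'X_{1..k}, (mdeg m < D)%N -> p@_m = 0.
Definition agree_below D p q := forall m : 'X_{1..k}, (mdeg m < D)%N -> p@_m = q@_m.

Lemma vanish_below0 D : vanish_below D 0.
Proof. by move=> m _; rewrite mcoeff0. Qed.

Lemma vanish_belowW D D' p : (D' <= D)%N -> vanish_below D p -> vanish_below D' p.
Proof. by move=> le h m lt; apply: h; apply: leq_trans lt le. Qed.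

Lemma vanish_belowD D p q :
  vanish_below D p -> vanish_below D q -> vanish_below D (p + q).
Proof. by move=> hp hq m lt; rewrite mcoeffD hp ?hq ?addr0. Qed.

Lemma vanish_belowM a b p q :
  vanish_below a p -> vanish_below b q -> vanish_below (a + b) (p * q).
Proof.
move=> hp hq m lt; rewrite mcoeffM big1 // => -[m1 m2] /eqP /= Em.
have [lt1|ge1] := ltnP (mdeg m1) a; first by rewrite hp // mul0r.
rewrite hq ?mulr0 // -(ltn_add2l (mdeg m1)) -mdegD -Em.
by apply: leq_trans lt _; rewrite leq_add2r.
Qed.

Lemma vanish_belowXn e p : vanish_below 1 p -> vanish_below e (p ^+ e).
Proof.
move=> h; elim: e => [|e IH]; first by [].
by rewrite exprS; apply: vanish_belowM h IH.
Qed.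

Lemma agree_belowD D p p' q q' :
  agree_below D p p' -> agree_below D q q' -> agree_below D (p + q) (p' + q').
Proof. by move=> hp hq m lt; rewrite !mcoeffD hp ?hq. Qed.

Lemma agree_belowM D p p' q q' :
  agree_below D p p' -> agree_below D q q' -> agree_below D (p * q) (p' * q').
Proof.
move=> hp hq m lt; apply: mcoeffM_local => m' le.
  by apply: hp; apply: leq_ltn_trans lt.
by apply: hq; apply: leq_ltn_trans lt.
Qed.

Lemma agree_belowXn D p q e : agree_below D p q -> agree_below D (p ^+ e) (q ^+ e).
Proof.
move=> h; elim: e => [|e IH]; first by [].
by rewrite !exprS; apply: agree_belowM.
Qed.

Lemma agree_below_vanish D p q : vanish_below D (p - q) -> agree_below D p q.
Proof. by move=> h m lt; apply/eqP; rewrite -subr_eq0 -mcoeffB h. Qed.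

End VanishBelow.

Section Composition.
Variables (R : comNzRingType) (n k : nat).
Implicit Types (S T : 'I_n -> {mpoly R[k]}) (p q : {mpoly R[n]}).

Definition mcomp T p : {mpoly R[k]} := mmap (@mpolyC k R) T p.

Lemma mmap1_vanish_below T (j : 'X_{1..n}) :
  (forall i, vanish_below 1 (T i)) -> vanish_below (mdeg j) (mmap1 T j).
Proof.
move=> hT; rewrite /mmap1 mdegE.
by elim/big_rec2: _ => [|i a p _ h] //; apply: vanish_belowM h; apply: vanish_belowXn.
Qed.

Lemma mmap1_agree_below D S T (j : 'X_{1..n}) :
  (forall i, agree_below D (S i) (T i)) -> agree_below D (mmap1 S j) (mmap1 T j).
Proof.
move=> h; rewrite /mmap1.
by elim/big_rec2: _ => [|i a p _ hp] //; apply: agree_belowM hp; apply: agree_belowXn.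
Qed.

Lemma mcomp_vanish_below D T p :
  (forall i, vanish_below 1 (T i)) -> vanish_below D p -> vanish_below D (mcomp T p).
Proof.
move=> hT hp; rewrite /mcomp /mmap big_seq.
elim/big_ind: _ => [|q r|m hm]; [exact: vanish_below0 | exact: vanish_belowD |].
have le : (D <= mdeg m)%N.
  by rewrite leqNgt; apply/negP => /hp; apply/eqP; rewrite -mcoeff_msupp.
move=> m' lt; rewrite mcoeffCM (vanish_belowW le (@mmap1_vanish_below T m hT)) //.
by rewrite mulr0.
Qed.

Lemma mcomp_agree_below D T p q : (forall i, vanish_below 1 (T i)) ->
  agree_below D p q -> agree_below D (mcomp T p) (mcomp T q).
Proof.
move=> hT h; apply: agree_below_vanish; rewrite /mcomp -mmapB.
by apply: mcomp_vanish_below => // m lt; rewrite mcoeffB h // subrr.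
Qed.

Lemma mcomp_agree_below_map D S T p :
  (forall i, agree_below D (S i) (T i)) -> agree_below D (mcomp S p) (mcomp T p).
Proof.
move=> h; rewrite /mcomp /mmap.
elim/big_rec2: _ => [|m a b _ hab] //; apply: agree_belowD hab.
by apply: agree_belowM => //; apply: mmap1_agree_below.
Qed.

End Composition.

Section NoConstTerm.
Variables (R : comNzRingType) (n : nat).
Implicit Types (f g : ps R n).

Definition no_const_term f := pscoef f 0%MM = 0.

Lemma pstrunc_vanish_below1 D f : no_const_term f -> vanish_below 1 (pstrunc D f).
Proof.
move=> f0 m; rewrite ltnS leqn0 mdeg_eq0 pstruncE => /eqP ->.
by rewrite f0; case: ifP.
Qed.

Lemma msize_pstrunc D f : (msize (pstrunc D f) <= D)%N.
Proof.
rewrite msizeE big_seq; elim/big_ind: _ => // [x y hx hy|m].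
  by rewrite geq_max hx hy.
by rewrite mcoeff_msupp pstruncE; case: ifP; rewrite ?eqxx.
Qed.

Lemma pstrunc_psC D (c : R) : (0 < D)%N -> pstrunc D (psC n c) = c%:MP.
Proof.
move=> D0; apply/mpolyP => m; rewrite pstruncE mcoeffC /=.
have [->|nz] := eqVneq m 0%MM; first by rewrite mdeg0 D0 mulr1.
by rewrite mulr0; case: ifP.
Qed.

Lemma pstrunc_psX D (i : 'I_n) : (1 < D)%N -> pstrunc D (psX i : ps R n) = 'X_i.
Proof.
move=> D1; apply/mpolyP => m; rewrite pstruncE mcoeffX /= eq_sym.
have [->|] := eqVneq m U_(i)%MM; first by rewrite mdeg1 D1.
by case: ifP.
Qed.

Lemma psX_no_const_term (i : 'I_n) : no_const_term (psX i : ps R n).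
Proof. by rewrite /no_const_term /=; case: eqP => // /(congr1 mdeg); rewrite mdeg0 mdeg1. Qed.

End NoConstTerm.
Arguments psX_no_const_term {R n} i.

Section Substitution.
Variables (R : comNzRingType) (n k : nat) (phi : 'I_n -> ps R k).
Implicit Types (a b : ps R n).

Lemma pscoef_ps_subst a m : pscoef (ps_subst phi a) m =
  (mcomp (fun i => pstrunc (mdeg m).+1 (phi i)) (pstrunc (mdeg m).+1 a))@_m.
Proof.
rewrite /= /mcomp (mmapE (mdeg m).+1) ?msize_pstrunc //.
by congr (mcoeff _ _); apply: eq_bigr => j _; rewrite pstruncE bmdeg mul_mpolyC.
Qed.

Lemma ps_subst_is_zmod_morphism : zmod_morphism (ps_subst phi).
Proof.
move=> a b; apply: psP => m /=; rewrite -mcoeffB -sumrB.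
by congr (mcoeff _ _); apply: eq_bigr => j _; rewrite scalerBl.
Qed.

HB.instance Definition _ := GRing.isZmodMorphism.Build (ps R n) (ps R k)
  (ps_subst phi) ps_subst_is_zmod_morphism.

Lemma ps_subst1 : ps_subst phi 1 = 1.
Proof.
apply: psP => m; rewrite pscoef_ps_subst pstrunc1 //.
by rewrite /mcomp (mmap_is_multiplicative _ _).2 mcoeff1.
Qed.

Lemma ps_substC (c : R) : ps_subst phi (psC n c) = psC k c.
Proof.
apply: psP => m; rewrite pscoef_ps_subst pstrunc_psC // /mcomp mmapC mcoeffC /=.
by case: eqP; rewrite ?mulr1 ?mulr0.
Qed.

Hypothesis phi0 : forall i, no_const_term (phi i).

Lemma pscoef_ps_substE D a m : (mdeg m < D)%N -> pscoef (ps_subst phi a) m =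
  (mcomp (fun i => pstrunc D (phi i)) (pstrunc D a))@_m.
Proof.
move=> lt; rewrite pscoef_ps_subst.
have agree_trunc (f : ps R _) : agree_below (mdeg m).+1 (pstrunc (mdeg m).+1 f) (pstrunc D f).
  by move=> m' lt'; rewrite !pstruncE lt' (leq_trans lt').
rewrite (mcomp_agree_below_map _ (fun i => agree_trunc _ (phi i))) //.
rewrite (@mcomp_agree_below _ _ _ (mdeg m).+1 _ _ (pstrunc D a)) // => i.
exact: pstrunc_vanish_below1.
Qed.

Lemma ps_substM a b : ps_subst phi (a * b) = ps_subst phi a * ps_subst phi b.
Proof.
apply: psP => m; set D := (mdeg m).+1.
rewrite (@pscoef_ps_substE D) // (@psmulE _ _ _ _ _ D) //.
rewrite (@mcomp_agree_below _ _ _ D _ _ (pstrunc D a * pstrunc D b)) //; first last.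
- by move=> m' lt; rewrite pstrunc_mul.
- by move=> i; apply: pstrunc_vanish_below1.
rewrite /mcomp (mmap_is_multiplicative _ _).1.
by apply: (agree_belowM (D := D)) => // m' lt; rewrite pstruncE lt (pscoef_ps_substE _ lt).
Qed.

Lemma ps_subst_psX (i : 'I_n) : ps_subst phi (psX i) = phi i.
Proof.
apply: psP => m; rewrite (@pscoef_ps_substE (mdeg m).+2) // pstrunc_psX //.
by rewrite /mcomp mmapX mmap1U pstruncE ltnS leqnSn.
Qed.

End Substitution.

Section Coefficients.
Variables (R : comNzRingType) (n : nat).
Implicit Types (f g : ps R n).

Lemma pscoefN f m : pscoef (- f) m = - pscoef f m.
Proof. by []. Qed.

Lemma pscoefB f g m : pscoef (f - g) m = pscoef f m - pscoef g m.
Proof. by []. Qed.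

Lemma pscoefCM c f m : pscoef (psC n c * f) m = c * pscoef f m.
Proof.
by rewrite (@psmulE _ _ _ _ _ (mdeg m).+1) // pstrunc_psC // mcoeffCM pstruncE ltnSn.
Qed.

Lemma pscoef0M f g : pscoef (f * g) 0%MM = pscoef f 0%MM * pscoef g 0%MM.
Proof.
have trunc1 h : pstrunc 1 h = (pscoef h 0%MM)%:MP.
  apply/mpolyP => m; rewrite pstruncE mcoeffC ltnS leqn0 mdeg_eq0.
  by case: eqP => [->|]; rewrite ?mulr1 ?mulr0.
by rewrite (@psmulE _ _ _ _ _ 1) ?mdeg0 // !trunc1 -mpolyCM mcoeffC eqxx mulr1.
Qed.

Lemma pscoefXM (i : 'I_n) f m : pscoef (psX i * f) m =
  if (0 < m i)%N then pscoef f (m - U_(i))%MM else 0.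
Proof.
rewrite (@psmulE _ _ _ _ _ (mdeg m).+2) // pstrunc_psX //.
case: ifP => [mi|mi].
  have Em : m = (U_(i) + (m - U_(i)))%MM.
    apply/mnmP => j; rewrite mnmDE mnmBE mnm1E.
    by case: eqP => [<-|] /=; [rewrite subnKC | rewrite subn0].
  rewrite [in LHS]Em mulrC mcoeffMX pstruncE.
  by rewrite (leq_ltn_trans (mdegB _ _)) // -Em ltnW.
rewrite mcoeffM big1 // => -[m1 m2] /eqP /= Em; rewrite mcoeffX.
case: eqP => [E1|]; last by rewrite mul0r.
have : (m i = m1 i + m2 i)%N by rewrite -mnmDE -Em.
by rewrite -E1 mnm1E eqxx => mi1; rewrite mi1 in mi.
Qed.

End Coefficients.

Section OneVariable.
Variables (R : comNzRingType) (v : R).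
Let t : ps R 1 := psX ord0.

Lemma mdeg_1var (m : 'X_{1..1}) : mdeg m = m ord0.
Proof. by rewrite mdegE big_ord1. Qed.

Lemma fgl_inv_series_eq : fgl_inv_series v * (1 - psC 1 v * t) = - t.
Proof.
rewrite mulrBr mulr1 mulrCA [_ * t]mulrC; apply: psP => m.
rewrite pscoefB pscoefN pscoefCM /t pscoefXM /= !mdeg_1var mnmBE mnm1E eqxx.
have -> : (m == U_(ord0))%MM = (m ord0 == 1%N).
  apply/eqP/eqP => [->|h]; first by rewrite mnm1E.
  by apply/mnmP => j; rewrite ord1 mnm1E h.
case: (m ord0) => [|[|j]] /=; rewrite ?mulr0 ?subr0 ?oppr0 ?expr0 //.
by rewrite exprS mulrN opprK addrC subrr.
Qed.

Definition geom_series : ps R 1 := PS (fun m => v ^+ mdeg m).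

Lemma geom_series_eq : geom_series * (1 - psC 1 v * t) = 1.
Proof.
rewrite mulrBr mulr1 mulrCA [_ * t]mulrC; apply: psP => m.
rewrite pscoefB pscoefCM /t pscoefXM /= !mdeg_1var mnmBE mnm1E eqxx.
rewrite -mdeg_eq0 mdeg_1var.
by case: (m ord0) => [|j] /=; rewrite ?mulr0 ?subr0 // subn1 /= exprS subrr.
Qed.

End OneVariable.

Section FormalGroupLaw.
Variables (R : comNzRingType) (v : R) (n : nat).
Implicit Types (f g y w : ps R n).

Lemma no_const_term_fgl_add f g :
  no_const_term f -> no_const_term g -> no_const_term (fgl_add v f g).
Proof.
rewrite /no_const_term /fgl_add => f0 g0.
by rewrite pscoefB pscoef0M [pscoef (_ + _) _]/= f0 g0 mulr0 subr0 addr0.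
Qed.

Section Substitute.
Variables (y : ps R n) (y0 : no_const_term y).
Let ysubst := ps_subst (fun _ : 'I_1 => y).
Let y_const0 : forall i : 'I_1, no_const_term ((fun _ => y) i). Proof. by []. Qed.

Lemma fgl_inv_eq : fgl_inv v y * (1 - psC n v * y) = - y.
Proof.
have := congr1 ysubst (fgl_inv_series_eq v).
rewrite /ysubst (ps_substM y_const0) raddfB raddfN /= (ps_substM y_const0).
by rewrite ps_subst1 ps_substC !ps_subst_psX.
Qed.

Lemma unit_1subv : exists u, (1 - psC n v * y) * u = 1.
Proof.
exists (ysubst (geom_series v)); rewrite mulrC.
have := congr1 ysubst (geom_series_eq v).
rewrite /ysubst (ps_substM y_const0) raddfB /= (ps_substM y_const0).
by rewrite ps_subst1 ps_substC !ps_subst_psX.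
Qed.

Lemma fgl_inv_unique w : w * (1 - psC n v * y) = - y -> w = fgl_inv v y.
Proof.
move=> wy; have [u hu] := unit_1subv.
by rewrite -[w]mulr1 -[fgl_inv v y]mulr1 -hu !mulrA wy fgl_inv_eq.
Qed.

Lemma fgl_add_inv : fgl_add v y (fgl_inv v y) = 0.
Proof.
have -> : fgl_add v y (fgl_inv v y) = y + fgl_inv v y * (1 - psC n v * y).
  by rewrite /fgl_add; ring.
by rewrite fgl_inv_eq subrr.
Qed.

Lemma fgl_addK f : fgl_sub v (fgl_add v f y) y = f.
Proof.
have -> : fgl_sub v (fgl_add v f y) y = fgl_add v f (fgl_add v y (fgl_inv v y)).
  by rewrite /fgl_sub /fgl_add; ring.
by rewrite fgl_add_inv /fgl_add; ring.
Qed.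

End Substitute.

End FormalGroupLaw.

Section FormalGroupLawMorphism.
Variables (R : comNzRingType) (v : R) (n k : nat) (phi : {rmorphism ps R n -> ps R k}).
Implicit Types (f g y : ps R n).
Hypothesis phiC : forall c, phi (psC n c) = psC k c.

Lemma rmorph_fgl_add f g : phi (fgl_add v f g) = fgl_add v (phi f) (phi g).
Proof. by rewrite /fgl_add rmorphB rmorphD !rmorphM phiC. Qed.

Lemma rmorph_fgl_inv y : no_const_term y -> no_const_term (phi y) ->
  phi (fgl_inv v y) = fgl_inv v (phi y).
Proof.
move=> y0 phiy0; apply: fgl_inv_unique => //.
by rewrite -phiC -(rmorph1 phi) -rmorphM -rmorphB -rmorphM fgl_inv_eq // rmorphN.
Qed.

Lemma rmorph_fgl_sub f g : no_const_term g -> no_const_term (phi g) ->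
  phi (fgl_sub v f g) = fgl_sub v (phi f) (phi g).
Proof. by move=> g0 phig0; rewrite /fgl_sub rmorph_fgl_add rmorph_fgl_inv. Qed.

End FormalGroupLawMorphism.

Section StanleyReisnerCongruence.
Variables (R : comNzRingType) (n : nat) (cones : {set {set 'I_n}}).
Implicit Types (c f g h : ps R n).

Lemma in_ideal0 : in_ideal cones (0 : ps R n).
Proof. by exists (fun _ => 0); rewrite big1 // => S _; rewrite mul0r. Qed.

Lemma in_idealD f g : in_ideal cones f -> in_ideal cones g -> in_ideal cones (f + g).
Proof.
case=> c1 -> [c2 ->]; exists (fun S => c1 S + c2 S).
by rewrite -big_split; apply: eq_bigr => S _; rewrite mulrDl.
Qed.

Lemma in_idealMl h f : in_ideal cones f -> in_ideal cones (h * f).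
Proof.
case=> c ->; exists (fun S => h * c S).
by rewrite mulr_sumr; apply: eq_bigr => S _; rewrite mulrA.
Qed.

Lemma in_idealN f : in_ideal cones f -> in_ideal cones (- f).
Proof. by rewrite -mulN1r; apply: in_idealMl. Qed.

#[export] Instance eqmod_equiv : Equivalence (@eqmod R n cones).
Proof.
split=> [f|f g|f g h]; rewrite /eqmod.
- by rewrite subrr; apply: in_ideal0.
- by move=> fg; rewrite -opprB; apply: in_idealN.
- by move=> fg gh; rewrite -[f](subrK g) -addrA; apply: in_idealD.
Qed.

#[export] Instance eqmod_add :
  Proper (eqmod cones ==> eqmod cones ==> eqmod cones) (@GRing.add (ps R n)).
Proof. by move=> f f' ff' g g' gg'; rewrite /eqmod opprD addrACA; apply: in_idealD. Qed.

#[export] Instance eqmod_opp : Proper (eqmod cones ==> eqmod cones) (@GRing.opp (ps R n)).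
Proof. by move=> f f' ff'; rewrite /eqmod -opprD; apply: in_idealN. Qed.

#[export] Instance eqmod_mul :
  Proper (eqmod cones ==> eqmod cones ==> eqmod cones) (@GRing.mul (ps R n)).
Proof.
move=> f f' ff' g g' gg'; rewrite /eqmod.
rewrite -[f * g](subrK (f' * g)) -addrA -mulrBl -mulrBr [_ * g]mulrC.
by apply: in_idealD; apply: in_idealMl.
Qed.

Lemma eqmod_nonface S : nonface cones S -> eqmod cones (\prod_(i in S) psX i : ps R n) 0.
Proof.
move=> nf; exists (fun S' => if S' == S then 1 else 0).
rewrite subr0 [RHS](bigD1 S) //= eqxx mul1r [X in _ + X]big1 ?addr0 // => S' /andP [_ /negbTE ->].
by rewrite mul0r.
Qed.

Lemma eqmod_mulXn c f g t :
  eqmod cones (c * f) (c * g) -> eqmod cones (c * f ^+ t) (c * g ^+ t).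
Proof.
move=> cfg; elim: t => [|t IH]; first by rewrite !expr0; reflexivity.
by rewrite !exprS mulrA cfg -mulrA mulrCA IH mulrCA; reflexivity.
Qed.

Variable v : R.

Lemma eqmod_mul_fgl_add c f g g' : eqmod cones (c * g) (c * g') ->
  eqmod cones (c * fgl_add v f g) (c * fgl_add v f g').
Proof.
have fglE h : c * fgl_add v f h = c * f + c * h * (1 - psC n v * f).
  by rewrite /fgl_add; ring.
by move=> cgg'; rewrite !fglE cgg'; reflexivity.
Qed.

Lemma eqmod_mul_fgl_inv c g g' : no_const_term g -> no_const_term g' ->
  eqmod cones (c * g) (c * g') -> eqmod cones (c * fgl_inv v g) (c * fgl_inv v g').
Proof.
move=> g0 g'0 cgg'.
have [u hu] := unit_1subv v g0; have [u' hu'] := unit_1subv v g'0.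
have fgl_invE h w : no_const_term h -> (1 - psC n v * h) * w = 1 -> fgl_inv v h = - h * w.
  by move=> h0 hw; rewrite -[fgl_inv v h]mulr1 -hw mulrA fgl_inv_eq.
rewrite (fgl_invE g u) // (fgl_invE g' u') // !mulNr !mulrN !mulrA cgg'.
have one_sub : eqmod cones (c * (1 - psC n v * g')) (c * (1 - psC n v * g)).
  by rewrite !mulrBr !mulr1 ![c * (_ * _)]mulrCA cgg'; reflexivity.
have -> : c * g' * u = g' * u * u' * (c * (1 - psC n v * g')).
  by transitivity (c * g' * u * ((1 - psC n v * g') * u')); [rewrite hu' mulr1 | ring].
rewrite one_sub.
have -> : g' * u * u' * (c * (1 - psC n v * g)) = c * g' * u' * ((1 - psC n v * g) * u).
  by ring.
by rewrite hu mulr1; reflexivity.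
Qed.

Lemma eqmod_mul_fgl_sub c f g g' : no_const_term g -> no_const_term g' ->
  eqmod cones (c * g) (c * g') -> eqmod cones (c * fgl_sub v f g) (c * fgl_sub v f g').
Proof.
by move=> g0 g'0 cgg'; apply: eqmod_mul_fgl_add; apply: eqmod_mul_fgl_inv.
Qed.

End StanleyReisnerCongruence.
Arguments eqmod_nonface {R n cones S}.

Lemma old_ray_inj N : injective (@old_ray N).
Proof. by move=> i j /(congr1 val) /= /val_inj. Qed.

Lemma nonface_star_cones N (cones : {set {set 'I_N}}) (sigma : {set 'I_N}) :
  nonface (star_cones cones sigma) (@old_ray N @: sigma).
Proof.
apply/forallP => S'; apply/implyP; rewrite inE => /existsP [th /andP [_]].
case/orP => [/andP [sigma_th /eqP ->]|/and3P [_ _ //]].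
apply: contra sigma_th => /subsetP sub; apply/subsetP => i i_sigma.
by have /imsetP [j j_th /old_ray_inj ->] := sub _ (imset_f (@old_ray N) i_sigma).
Qed.

Section Pullback.
Variables (R : comNzRingType) (v : R) (N : nat) (sigma : {set 'I_N}).

Lemma pullback_no_const_term (i : 'I_N) :
  no_const_term (if i \in sigma then fgl_add v (psX (old_ray i)) (psX (new_ray N))
                 else psX (old_ray i) : ps R N.+1).
Proof.
by case: ifP => _; [apply: no_const_term_fgl_add|]; apply: psX_no_const_term.
Qed.

HB.instance Definition _ := GRing.isZmodMorphism.Build (ps R N) (ps R N.+1)
  (pullback v sigma) (ps_subst_is_zmod_morphism _).

HB.instance Definition _ := GRing.isMonoidMorphism.Build (ps R N) (ps R N.+1)
  (pullback v sigma) (ps_subst1 _, ps_substM pullback_no_const_term).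

Lemma pullbackC c : pullback v sigma (psC N c) = psC N.+1 c.
Proof. exact: ps_substC. Qed.

Lemma pullback_psX_sigma i : i \in sigma ->
  pullback v sigma (psX i) = fgl_add v (psX (old_ray i)) (psX (new_ray N)).
Proof. by move=> i_sigma; rewrite /pullback (ps_subst_psX pullback_no_const_term) i_sigma. Qed.

End Pullback.

Section PushforwardPowers.
Variables (T : comNzRingType) (c X Y : T).

Definition pushforward_Epow n :=
  c * (\sum_(1 <= i < n.+1) X ^+ (n.+1 - i) * Y ^+ i) - \sum_(1 <= i < n) X ^+ (n - i) * Y ^+ i.

Lemma pushforward_Epow1 : pushforward_Epow 1 = c * X * Y.
Proof. by rewrite /pushforward_Epow big_nat1 big_geq // subr0 subSnn !expr1 mulrA. Qed.

Lemma sum_mixed_powersS m : (0 < m)%N ->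
  \sum_(1 <= i < m.+1) X ^+ (m.+1 - i) * Y ^+ i =
  X * \sum_(1 <= i < m) X ^+ (m - i) * Y ^+ i + X * Y ^+ m.
Proof.
move=> m0; rewrite big_nat_recr //= subSnn expr1 mulr_sumr; congr (_ + _).
by apply: eq_big_nat => i /andP [_ lt]; rewrite subSn ?(ltnW lt) // exprS mulrA.
Qed.

Lemma pushforward_EpowS n : (0 < n)%N ->
  pushforward_Epow n.+1 = X * pushforward_Epow n - X * Y ^+ n + c * X * Y ^+ n.+1.
Proof. by move=> n0; rewrite /pushforward_Epow !sum_mixed_powersS //; ring. Qed.

End PushforwardPowers.

Section BlowupPushforward.
Variables (R : comNzRingType) (v : R) (N : nat) (cones : {set {set 'I_N}}).
Variables (a b : 'I_N) (sigma : {set 'I_N}) (pf : ps R N.+1 -> ps R N).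
Hypotheses (a_neq_b : a != b) (sigma_ab : sigma = [set a; b]).
Let cones' := star_cones cones sigma.
Hypothesis pf_eqmod : forall f g, eqmod cones' f g -> eqmod cones (pf f) (pf g).
Hypothesis pfD : forall f g, eqmod cones (pf (f + g)) (pf f + pf g).
Hypothesis pf_projection : forall c f, eqmod cones (pf (pullback v sigma c * f)) (c * pf f).
Hypothesis pf1 : eqmod cones (pf 1) 1.
Hypothesis pf_psX : forall i, eqmod cones (pf (psX (old_ray i))) (psX i).

#[local] Instance pf_proper : Proper (eqmod cones' ==> eqmod cones) pf := pf_eqmod.

Local Notation pi := (pullback v sigma).
Local Notation o i := (psX (old_ray i) : ps R N.+1).
Local Notation e := (psX (new_ray N) : ps R N.+1).
Local Notation x i := (psX i : ps R N).

Lemma a_in_sigma : a \in sigma. Proof. by rewrite sigma_ab !inE eqxx. Qed.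
Lemma b_in_sigma : b \in sigma. Proof. by rewrite sigma_ab !inE eqxx orbT. Qed.

Lemma pfB f g : eqmod cones (pf (f - g)) (pf f - pf g).
Proof. by have := pfD (f - g) g; rewrite subrK => ->; rewrite addrK; reflexivity. Qed.

Lemma pfZ c f : eqmod cones (pf (psC N.+1 c * f)) (psC N c * pf f).
Proof. by rewrite -(pullbackC v sigma) pf_projection; reflexivity. Qed.

Lemma oa_ob_eqmod0 : eqmod cones' (o a * o b) 0.
Proof.
have old_sigma : @old_ray N @: sigma = [set old_ray a; old_ray b].
  by rewrite sigma_ab imsetU1 imset_set1.
have := eqmod_nonface (R := R) (nonface_star_cones cones sigma).
rewrite old_sigma big_setU1 ?big_set1 //= inE.
by apply: contra a_neq_b => /eqP /old_ray_inj ->.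
Qed.

Lemma oa_fgl_add_ob f : eqmod cones' (o a * fgl_add v (o b) f) (o a * f).
Proof.
have -> : o a * fgl_add v (o b) f = o a * f + o a * o b * (1 - psC N.+1 v * f).
  by rewrite /fgl_add; ring.
by rewrite oa_ob_eqmod0 mul0r addr0; reflexivity.
Qed.

Lemma oa_pullback_Epow t : eqmod cones' (o a * e ^+ t) (o a * pi (x b ^+ t)).
Proof.
rewrite rmorphXn /= pullback_psX_sigma ?b_in_sigma //.
by rewrite (eqmod_mulXn t (oa_fgl_add_ob e)); reflexivity.
Qed.

Lemma pf_oa_Epow t : eqmod cones (pf (o a * e ^+ t)) (x a * x b ^+ t).
Proof. by rewrite oa_pullback_Epow mulrC pf_projection pf_psX mulrC; reflexivity. Qed.

Lemma oa_pullback_fgl_sub :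
  eqmod cones' (o a * pi (fgl_sub v (x a) (x b))) (o a * o a).
Proof.
have fgl0 :=
  no_const_term_fgl_add v (psX_no_const_term (old_ray b)) (psX_no_const_term (new_ray N)).
have pi_b0 : no_const_term (pi (x b)) by rewrite pullback_psX_sigma ?b_in_sigma.
rewrite (rmorph_fgl_sub v (pullbackC v sigma) _ (psX_no_const_term b) pi_b0) /=.
rewrite !pullback_psX_sigma ?a_in_sigma ?b_in_sigma //.
rewrite (eqmod_mul_fgl_sub v _ fgl0 (psX_no_const_term _) (oa_fgl_add_ob e)).
by rewrite (fgl_addK v (psX_no_const_term (new_ray N))); reflexivity.
Qed.

Lemma pf_oa_pow_Epow s t : eqmod cones (pf (o a ^+ s.+1 * e ^+ t))
  (x a * x b ^+ t * fgl_sub v (x a) (x b) ^+ s).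
Proof.
set g := fgl_sub v (x a) (x b).
have -> : o a ^+ s.+1 * e ^+ t = e ^+ t * (o a * o a ^+ s) by rewrite exprS; ring.
rewrite -(eqmod_mulXn s oa_pullback_fgl_sub).
have -> : e ^+ t * (o a * pi g ^+ s) = pi g ^+ s * (o a * e ^+ t) by ring.
rewrite oa_pullback_Epow.
have -> : pi g ^+ s * (o a * pi (x b ^+ t)) = pi (x b ^+ t * g ^+ s) * o a.
  by rewrite rmorphM !rmorphXn /=; ring.
by rewrite pf_projection pf_psX mulrC mulrA; reflexivity.
Qed.

Lemma pf_Epow_rec n : eqmod cones (pf (e ^+ n.+1))
  (x a * pf (e ^+ n) - x a * x b ^+ n + psC N v * x a * x b ^+ n.+1).
Proof.
have := pf_projection (x a) (e ^+ n).
rewrite pullback_psX_sigma ?a_in_sigma //.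
have -> : fgl_add v (o a) e * e ^+ n =
          o a * e ^+ n + e ^+ n.+1 - psC N.+1 v * (o a * e ^+ n.+1).
  by rewrite /fgl_add exprS; ring.
rewrite pfB pfD pfZ !pf_oa_Epow => <-.
by apply: eq_subrelation; ring.
Qed.

Lemma pf_E : eqmod cones (pf e) (psC N v * x a * x b).
Proof.
by rewrite -[e]expr1 pf_Epow_rec expr0 pf1 expr1 mulr1 subrr add0r; reflexivity.
Qed.

Lemma pf_Epow n : (0 < n)%N ->
  eqmod cones (pf (e ^+ n)) (pushforward_Epow (psC N v) (x a) (x b) n).
Proof.
elim: n => // -[_ _|n IH _]; first by rewrite expr1 pf_E pushforward_Epow1; reflexivity.
by rewrite pf_Epow_rec IH // [pushforward_Epow _ _ _ n.+2]pushforward_EpowS //; reflexivity.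
Qed.

End BlowupPushforward.

Theorem theorem5p1 (R : comNzRingType) (v : R) (d N : nat)
  (vr : 'I_N -> 'rV[int]_d) (cones : {set {set 'I_N}}) (rho1 rho2 : 'I_N)
  (pf : ps R N.+1 -> ps R N) :
  smooth_fan vr cones ->
  rho1 != rho2 -> [set rho1; rho2] \in cones ->
  let sigma := [set rho1; rho2] in
  let cones' := star_cones cones sigma in
  let xE := psX (new_ray N) in
  (forall f g, eqmod cones' f g -> eqmod cones (pf f) (pf g)) ->
  (forall f g, eqmod cones (pf (f + g)) (pf f + pf g)) ->
  (forall a f, eqmod cones (pf (pullback v sigma a * f)) (a * pf f)) ->
  eqmod cones (pf 1) 1 ->
  (forall i : 'I_N, eqmod cones (pf (psX (old_ray i))) (psX i)) ->
  let x1 := psX rho1 in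
  let x2 := psX rho2 in
  [/\ eqmod cones (pf xE) (psC N v * x1 * x2),
      forall n : nat, (2 <= n)%N ->
        eqmod cones (pf (xE ^+ n))
          (psC N v * (\sum_(1 <= i < n.+1) x1 ^+ (n.+1 - i) * x2 ^+ i)
           - \sum_(1 <= i < n) x1 ^+ (n - i) * x2 ^+ i)
    & forall a b : 'I_N, (a, b) = (rho1, rho2) \/ (a, b) = (rho2, rho1) ->
        forall s t : nat, (1 <= s)%N ->
        eqmod cones (pf (psX (old_ray a) ^+ s * xE ^+ t))
          (psX a * psX b ^+ t * fgl_sub v (psX a) (psX b) ^+ (s - 1))].
Proof.
move=> _ rho12 _ sigma cones' xE pf_eqmod pfD pf_proj pf1 pf_psX x1 x2.
have rho21 : rho2 != rho1 by rewrite eq_sym.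
have sigma21 : sigma = [set rho2; rho1] by rewrite setUC.
split.
- exact: (pf_E rho12 (erefl sigma) pf_eqmod pfD pf_proj pf1 pf_psX).
- by move=> n n2; apply: (pf_Epow rho12 (erefl sigma) pf_eqmod pfD pf_proj pf1 pf_psX (ltnW n2)).
move=> a b ab [//|s] t _; rewrite subn1 /=.
case: ab => -[-> ->].
  exact: (pf_oa_pow_Epow rho12 (erefl sigma) pf_eqmod pf_proj pf_psX).
exact: (pf_oa_pow_Epow rho21 sigma21 pf_eqmod pf_proj pf_psX).
Qed.
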